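(* Let $X = [X_1 \; X_2] \in \mathbb{R}^{N\times P}$ with $X_1 \in \mathbb{R}^{N\times P_1}$, $X_2\in\mathbb{R}^{N\times P_2}$, $P = P_1+P_2$, and suppose the $N$-vector of ones $\mathbf{1}$ lies in the column span of $X_1$. Consider the hierarchical normal linear regression $$\mathbf{Y}\mid \boldsymbol\beta,\Phi \sim N(X_1\boldsymbol\beta_1 + X_2\boldsymbol\beta_2,\Phi),\quad \boldsymbol\beta_1\sim N(0,C),\quad \boldsymbol\beta_2\mid\Sigma\sim N(0,\Sigma),\quad \Sigma\sim f(\Sigma),\ \Phi\sim f(\Phi),$$ where $\Sigma\in\mathbb{R}^{P_2\times P_2}$ is positive definite and $\Phi\in\mathbb{R}^{N\times N}$ is diagonal and positive definite; in the Bayesian setting the prior densities $f(\Sigma)$, $f(\Phi)$ are such that the posterior is proper. Let $W$ be the $N\times N$ matrix of borrowing factors $$W = XVX'\Phi^{-1},\qquad V = \left(X'\Phi^{-1}X + \begin{bmatrix} C^{-1} & 0\\ 0 & \Sigma^{-1}\end{bmatrix}\right)^{-1},$$ where $C^{-1}$ is taken to be the $P_1\times P_1$ zero matrix. Then $\sum_{j=1}^N w_{ij} = 1$ for all $i=1,\dots,N$, i.e. $W\mathbf{1}=\mathbf{1}$.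
   Context: $w_{ij}$ denotes the $(i,j)$ entry of $W$ (the ''borrowing factor'' placed on $Y_j$ in the point estimate $\hat Y_i = (W\mathbf{Y})_i$). $W$ is defined for given values of $\Sigma$ and $\Phi$, and $V$ is assumed to exist (the displayed matrix is invertible). Setting $C^{-1}=0$ corresponds to giving the fixed effects $\boldsymbol\beta_1$ infinite prior variance. *)

From HB Require Import structures.
From mathcomp Require Import all_boot all_order all_algebra.
Set Implicit Arguments. Unset Strict Implicit. Unset Printing Implicit Defensive.
Import Order.TTheory GRing.Theory Num.Theory.
Local Open Scope ring_scope.

Definition posdef (R : realFieldType) (n : nat) (A : 'M[R]_n) : Prop :=
  A^T = A /\ forall u : 'rV[R]_n, u != 0 -> 0 < (u *m A *m u^T) 0 0.

Definition diag_posdef (R : realFieldType) (n : nat) (A : 'M[R]_n) : Prop :=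
  is_diag_mx A /\ forall i, 0 < A i i.

Definition prec_mx (R : realFieldType) (N P1 P2 : nat)
  (X1 : 'M[R]_(N, P1)) (X2 : 'M[R]_(N, P2)) (Sigma : 'M[R]_P2) (Phi : 'M[R]_N)
  : 'M[R]_(P1 + P2) :=
  (row_mx X1 X2)^T *m invmx Phi *m row_mx X1 X2
  + block_mx (0 : 'M[R]_(P1, P1)) 0 0 (invmx Sigma).

Definition V_mx (R : realFieldType) (N P1 P2 : nat)
  (X1 : 'M[R]_(N, P1)) (X2 : 'M[R]_(N, P2)) (Sigma : 'M[R]_P2) (Phi : 'M[R]_N) :=
  invmx (prec_mx X1 X2 Sigma Phi).

Definition W_mx (R : realFieldType) (N P1 P2 : nat)
  (X1 : 'M[R]_(N, P1)) (X2 : 'M[R]_(N, P2)) (Sigma : 'M[R]_P2) (Phi : 'M[R]_N)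
  : 'M[R]_N :=
  row_mx X1 X2 *m V_mx X1 X2 Sigma Phi *m (row_mx X1 X2)^T *m invmx Phi.

(* Since 1 = X1 b, the vector e = (b, 0) satisfies X e = 1 and is annihilated by
   blockdiag(0, Sigma^-1).  Hence the precision matrix M sends e to X' Phi^-1 X e
   = X' Phi^-1 1, so V X' Phi^-1 1 = M^-1 M e = e and W 1 = X e = 1. *)
From mathcomp Require Import all_boot all_algebra.
Import GRing.Theory.
Local Open Scope ring_scope.

Lemma mulmx_const1E (R : pzSemiRingType) (m n : nat) (A : 'M[R]_(m, n)) (i : 'I_m) :
  (A *m (const_mx 1 : 'cV_n)) i 0 = \sum_(j < n) A i j.
Proof. by rewrite mxE; apply: eq_bigr => j _; rewrite mxE mulr1. Qed.

Lemma hat_mx_fixed (R : comUnitRingType) (m n : nat)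
  (A : 'M[R]_(m, n)) (D : 'M[R]_m) (B : 'M[R]_n) (e : 'cV[R]_n) :
  A^T *m D *m A + B \in unitmx -> B *m e = 0 ->
  A *m invmx (A^T *m D *m A + B) *m A^T *m D *m (A *m e) = A *m e.
Proof.
set M := A^T *m D *m A + B => unitM Be0.
have Me : M *m e = A^T *m D *m (A *m e).
  by rewrite mulmxDl Be0 addr0 !mulmxA.
by rewrite -!mulmxA [A^T *m (D *m _)]mulmxA -Me mulKmx.
Qed.

Theorem theorem1 (R : realFieldType) (N P1 P2 : nat)
  (X1 : 'M[R]_(N, P1)) (X2 : 'M[R]_(N, P2)) (Sigma : 'M[R]_P2) (Phi : 'M[R]_N)
  (hspan : exists b : 'cV[R]_P1, X1 *m b = const_mx 1)
  (hSigma : posdef Sigma)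
  (hPhi : diag_posdef Phi)
  (hV : prec_mx X1 X2 Sigma Phi \in unitmx) :
  (forall i : 'I_N, \sum_(j < N) W_mx X1 X2 Sigma Phi i j = 1) /\
  W_mx X1 X2 Sigma Phi *m (const_mx 1 : 'cV[R]_N) = const_mx 1.
Proof.
(* hSigma and hPhi only serve to make V exist, which hV already grants. *)
have [b X1b] := hspan.
have Xe : row_mx X1 X2 *m col_mx b 0 = const_mx 1.
  by rewrite mul_row_col mulmx0 addr0.
have Be : block_mx (0 : 'M_P1) 0 0 (invmx Sigma) *m col_mx b (0 : 'cV_P2) = 0.
  by rewrite mul_block_col !mul0mx mulmx0 !addr0 col_mx0.
have W1 : W_mx X1 X2 Sigma Phi *m (const_mx 1 : 'cV_N) = const_mx 1.
  by rewrite -Xe; exact: hat_mx_fixed.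
by split=> // i; rewrite -mulmx_const1E W1 mxE.
Qed.
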